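(* Let $\Sigma_1 \subset \mathbb{R}^{N_1}$ and $\Sigma_2 \subset \mathbb{R}^{N_2}$ be nonempty, and let $\Sigma = \Sigma_1 \times \Sigma_2 \subset \mathbb{R}^{N_1}\times\mathbb{R}^{N_2}$, equipped with the norm $\|(x_1,x_2)\|_2 = \sqrt{\|x_1\|_2^2 + \|x_2\|_2^2}$. For $i = 1,2$ let $P_i$ be a generalized projection onto $\Sigma_i$ minimizing $\beta_{\Sigma_i}$ over all generalized projections onto $\Sigma_i$, with $\beta_{\Sigma_i}(P_i) < \infty$. Define $P_\Sigma(z_1, z_2) = (P_1(z_1), P_2(z_2))$ (i.e., the set $P_1(z_1)\times P_2(z_2)$). Then $P_\Sigma$ minimizes $\beta_\Sigma$ over all generalized projections onto $\Sigma$.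
   Context: A (set-valued) generalized projection onto $\Sigma \subset \mathbb{R}^N$ is a map $P$ assigning to each $z \in \mathbb{R}^N$ a nonempty subset $P(z) \subset \Sigma$. Restricted Lipschitz property: $P$ has the restricted $\beta$-Lipschitz property with respect to $\Sigma$ if for all $z \in \mathbb{R}^N$, all $x \in \Sigma$ and all $u \in P(z)$, $\|u - x\|_2 \le \beta\|z - x\|_2$; $\beta_\Sigma(P)$ denotes the smallest such $\beta$ (possibly $+\infty$). *)

From HB Require Import structures.
From mathcomp Require Import all_boot all_order all_algebra.
From mathcomp Require Import boolp classical_sets reals constructive_ereal ereal.
Set Implicit Arguments. Unset Strict Implicit. Unset Printing Implicit Defensive.
Import Order.TTheory GRing.Theory Num.Theory.
Local Open Scope ring_scope.
Local Open Scope classical_set_scope.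

Definition norm2 {R : realType} {N : nat} (v : 'rV[R]_N) : R :=
  Num.sqrt (\sum_(i < N) v ord0 i ^+ 2).

Definition gen_proj {R : realType} {N : nat}
  (Sigma : set 'rV[R]_N) (P : 'rV[R]_N -> set 'rV[R]_N) : Prop :=
  forall z, P z !=set0 /\ P z `<=` Sigma.

Definition restricted_lipschitz {R : realType} {N : nat}
  (Sigma : set 'rV[R]_N) (P : 'rV[R]_N -> set 'rV[R]_N) (beta : R) : Prop :=
  forall z x u, Sigma x -> P z u -> norm2 (u - x) <= beta * norm2 (z - x).

(* beta_Sigma(P): the smallest (nonnegative) such beta, +oo if none. *)
Definition beta_Sigma {R : realType} {N : nat}
  (Sigma : set 'rV[R]_N) (P : 'rV[R]_N -> set 'rV[R]_N) : \bar R :=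
  ereal_inf [set b%:E | b in [set b : R | 0 <= b /\ restricted_lipschitz Sigma P b]].

(* Cartesian product of sets, via concatenation R^N1 x R^N2 = R^(N1+N2);
   the Euclidean norm of row_mx x1 x2 is sqrt(|x1|^2 + |x2|^2). *)
Definition prod_set {R : realType} {N1 N2 : nat}
  (S1 : set 'rV[R]_N1) (S2 : set 'rV[R]_N2) : set 'rV[R]_(N1 + N2) :=
  [set row_mx x1 x2 | x1 in S1 & x2 in S2].

Definition prod_proj {R : realType} {N1 N2 : nat}
  (P1 : 'rV[R]_N1 -> set 'rV[R]_N1) (P2 : 'rV[R]_N2 -> set 'rV[R]_N2)
  (z : 'rV[R]_(N1 + N2)) : set 'rV[R]_(N1 + N2) :=
  prod_set (P1 (lsubmx z)) (P2 (rsubmx z)).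

From HB Require Import structures.
From mathcomp Require Import all_boot all_order all_algebra.
From mathcomp Require Import boolp classical_sets reals constructive_ereal ereal.
Import Order.TTheory GRing.Theory Num.Theory.
Local Open Scope ring_scope.
Local Open Scope classical_set_scope.

(* If both factor projections are restricted [b]-Lipschitz, so is the product
   projection, since squared norms add up over the two blocks.  Conversely, a
   restricted [b]-Lipschitz projection [Q] onto the product induces one onto
   each factor by freezing the other block at a point of the other factor: the
   frozen block contributes nothing on the right-hand side and something
   nonnegative on the left.  By optimality, beta of [P1] and of [P2] are thus
   at most every admissible constant [b] of [Q], and so is beta of the product
   projection. *)

Section SquaredNorm.
Context {R : realType}.

Definition sqnorm {N : nat} (v : 'rV[R]_N) : R := \sum_(i < N) v ord0 i ^+ 2.

Lemma sqnorm_ge0 N (v : 'rV[R]_N) : 0 <= sqnorm v.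
Proof. by apply: sumr_ge0 => i _; exact: sqr_ge0. Qed.

Lemma sqnorm0 N : sqnorm (0 : 'rV[R]_N) = 0.
Proof. by rewrite /sqnorm big1 // => i _; rewrite mxE expr0n. Qed.

Lemma sqnorm_row_mx N1 N2 (a : 'rV[R]_N1) (b : 'rV[R]_N2) :
  sqnorm (row_mx a b) = sqnorm a + sqnorm b.
Proof.
rewrite /sqnorm big_split_ord /=.
by congr (_ + _); apply: eq_bigr => i _; rewrite ?row_mxEl ?row_mxEr.
Qed.

Lemma sqnorm_row_mxB N1 N2 (a c : 'rV[R]_N1) (b d : 'rV[R]_N2) :
  sqnorm (row_mx a b - row_mx c d) = sqnorm (a - c) + sqnorm (b - d).
Proof. by rewrite opp_row_mx add_row_mx sqnorm_row_mx. Qed.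

Lemma norm2_le_mulE {N M} {v : 'rV[R]_N} {w : 'rV[R]_M} {c} : 0 <= c ->
  (norm2 v <= c * norm2 w) <-> (sqnorm v <= c ^+ 2 * sqnorm w).
Proof.
move=> c0; rewrite /norm2 -/(sqnorm v) -/(sqnorm w).
have -> : c * Num.sqrt (sqnorm w) = Num.sqrt (c ^+ 2 * sqnorm w).
  by rewrite sqrtrM ?sqr_ge0 // sqrtr_sqr ger0_norm.
by rewrite ler_sqrt // mulr_ge0 ?sqr_ge0 ?sqnorm_ge0.
Qed.

End SquaredNorm.

Section LipschitzConstant.
Context {R : realType} {N : nat} {S : set 'rV[R]_N} {P : 'rV[R]_N -> set 'rV[R]_N}.

Lemma restricted_lipschitz_le b c : b <= c ->
  restricted_lipschitz S P b -> restricted_lipschitz S P c.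
Proof.
move=> bc Pb z x u Sx Pu; apply: le_trans (Pb z x u Sx Pu) _.
by apply: ler_wpM2r => //; rewrite /norm2 sqrtr_ge0.
Qed.

Lemma beta_Sigma_le {b} : 0 <= b ->
  restricted_lipschitz S P b -> (beta_Sigma S P <= b%:E)%E.
Proof. by move=> b0 Pb; apply: ge_ereal_inf; exists b%:E => //; exists b. Qed.

Lemma beta_Sigma_lt {c} : (beta_Sigma S P < c%:E)%E ->
  0 <= c /\ restricted_lipschitz S P c.
Proof.
move=> /ereal_inf_lt [_ [b [b0 Pb] <-]]; rewrite lte_fin => /ltW bc.
by split; [exact: le_trans bc | exact: restricted_lipschitz_le Pb].
Qed.

End LipschitzConstant.

Section Product.
Context {R : realType} {N1 N2 : nat}.
Context {S1 : set 'rV[R]_N1} {S2 : set 'rV[R]_N2}.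
Context {P1 : 'rV[R]_N1 -> set 'rV[R]_N1} {P2 : 'rV[R]_N2 -> set 'rV[R]_N2}.
Context {Q : 'rV[R]_(N1 + N2) -> set 'rV[R]_(N1 + N2)}.

Lemma prod_set_lsubmx u : prod_set S1 S2 u -> S1 (lsubmx u).
Proof. by move=> [x1 Sx1 [x2 _ <-]]; rewrite row_mxKl. Qed.

Lemma prod_set_rsubmx u : prod_set S1 S2 u -> S2 (rsubmx u).
Proof. by move=> [x1 _ [x2 Sx2 <-]]; rewrite row_mxKr. Qed.

Lemma gen_proj_prod_proj : gen_proj S1 P1 -> gen_proj S2 P2 ->
  gen_proj (prod_set S1 S2) (prod_proj P1 P2).
Proof.
move=> P1S1 P2S2 z; split.
  have [[u1 Pu1] _] := P1S1 (lsubmx z); have [[u2 Pu2] _] := P2S2 (rsubmx z).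
  by exists (row_mx u1 u2); exists u1 => //; exists u2.
move=> _ [u1 Pu1 [u2 Pu2 <-]]; exists u1; first exact: (P1S1 _).2 _ Pu1.
by exists u2 => //; exact: (P2S2 _).2 _ Pu2.
Qed.

Lemma restricted_lipschitz_prod_proj c : 0 <= c ->
  restricted_lipschitz S1 P1 c -> restricted_lipschitz S2 P2 c ->
  restricted_lipschitz (prod_set S1 S2) (prod_proj P1 P2) c.
Proof.
move=> c0 P1c P2c z _ _ [x1 Sx1 [x2 Sx2 <-]] [u1 Pu1 [u2 Pu2 <-]].
move: (P1c _ _ _ Sx1 Pu1) (P2c _ _ _ Sx2 Pu2).
move=> /(norm2_le_mulE c0) le1 /(norm2_le_mulE c0) le2; apply/norm2_le_mulE => //.
by rewrite -(hsubmxK z) !sqnorm_row_mxB mulrDr lerD.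
Qed.

Lemma beta_Sigma_prod_proj_le b :
  (beta_Sigma S1 P1 <= b%:E)%E -> (beta_Sigma S2 P2 <= b%:E)%E ->
  (beta_Sigma (prod_set S1 S2) (prod_proj P1 P2) <= b%:E)%E.
Proof.
move=> le1 le2; apply/lee_addgt0Pr => e e0; rewrite -EFinD.
have lt_be (x : \bar R) : (x <= b%:E)%E -> (x < (b + e)%:E)%E.
  by move=> xb; apply: le_lt_trans xb _; rewrite lte_fin ltrDl.
have [c0 P1c] := beta_Sigma_lt (lt_be _ le1).
have [_ P2c] := beta_Sigma_lt (lt_be _ le2).
exact/(beta_Sigma_le c0)/restricted_lipschitz_prod_proj.
Qed.

Definition slice_lproj (x2 : 'rV[R]_N2) (z1 : 'rV[R]_N1) : set 'rV[R]_N1 :=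
  lsubmx @` Q (row_mx z1 x2).

Definition slice_rproj (x1 : 'rV[R]_N1) (z2 : 'rV[R]_N2) : set 'rV[R]_N2 :=
  rsubmx @` Q (row_mx x1 z2).

Lemma gen_proj_slice_lproj x2 :
  gen_proj (prod_set S1 S2) Q -> gen_proj S1 (slice_lproj x2).
Proof.
move=> QS z1; have [[u Qu] QS'] := QS (row_mx z1 x2).
by split; [exists (lsubmx u), u | move=> _ [v /QS' /prod_set_lsubmx Sv <-]].
Qed.

Lemma gen_proj_slice_rproj x1 :
  gen_proj (prod_set S1 S2) Q -> gen_proj S2 (slice_rproj x1).
Proof.
move=> QS z2; have [[u Qu] QS'] := QS (row_mx x1 z2).
by split; [exists (rsubmx u), u | move=> _ [v /QS' /prod_set_rsubmx Sv <-]].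
Qed.

Lemma restricted_lipschitz_blocks {b x1 x2 z1 z2 u} : 0 <= b ->
  restricted_lipschitz (prod_set S1 S2) Q b -> S1 x1 -> S2 x2 ->
  Q (row_mx z1 z2) u ->
  sqnorm (lsubmx u - x1) + sqnorm (rsubmx u - x2)
    <= b ^+ 2 * (sqnorm (z1 - x1) + sqnorm (z2 - x2)).
Proof.
move=> b0 Qb Sx1 Sx2 Qu.
have Sx : prod_set S1 S2 (row_mx x1 x2) by exists x1 => //; exists x2.
move: (Qb _ _ _ Sx Qu) => /(norm2_le_mulE b0).
by rewrite -{1}(hsubmxK u) !sqnorm_row_mxB.
Qed.

Lemma restricted_lipschitz_slice_lproj {b x2} : 0 <= b -> S2 x2 ->
  restricted_lipschitz (prod_set S1 S2) Q b ->
  restricted_lipschitz S1 (slice_lproj x2) b.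
Proof.
move=> b0 Sx2 Qb z1 x1 _ Sx1 [u Qu <-]; apply/norm2_le_mulE => //.
move: (restricted_lipschitz_blocks b0 Qb Sx1 Sx2 Qu).
rewrite subrr sqnorm0 addr0; apply: le_trans.
by rewrite lerDl sqnorm_ge0.
Qed.

Lemma restricted_lipschitz_slice_rproj {b x1} : 0 <= b -> S1 x1 ->
  restricted_lipschitz (prod_set S1 S2) Q b ->
  restricted_lipschitz S2 (slice_rproj x1) b.
Proof.
move=> b0 Sx1 Qb z2 x2 _ Sx2 [u Qu <-]; apply/norm2_le_mulE => //.
move: (restricted_lipschitz_blocks b0 Qb Sx1 Sx2 Qu).
rewrite subrr sqnorm0 add0r; apply: le_trans.
by rewrite lerDr sqnorm_ge0.
Qed.

End Product.

Theorem lemma2 (R : realType) (N1 N2 : nat)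
  (Sigma1 : set 'rV[R]_N1) (Sigma2 : set 'rV[R]_N2)
  (P1 : 'rV[R]_N1 -> set 'rV[R]_N1) (P2 : 'rV[R]_N2 -> set 'rV[R]_N2) :
  Sigma1 !=set0 -> Sigma2 !=set0 ->
  gen_proj Sigma1 P1 -> gen_proj Sigma2 P2 ->
  (forall Q1, gen_proj Sigma1 Q1 -> (beta_Sigma Sigma1 P1 <= beta_Sigma Sigma1 Q1)%E) ->
  (forall Q2, gen_proj Sigma2 Q2 -> (beta_Sigma Sigma2 P2 <= beta_Sigma Sigma2 Q2)%E) ->
  (beta_Sigma Sigma1 P1 < +oo)%E -> (beta_Sigma Sigma2 P2 < +oo)%E ->
  gen_proj (prod_set Sigma1 Sigma2) (prod_proj P1 P2) /\
  (forall Q, gen_proj (prod_set Sigma1 Sigma2) Q ->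
     (beta_Sigma (prod_set Sigma1 Sigma2) (prod_proj P1 P2)
        <= beta_Sigma (prod_set Sigma1 Sigma2) Q)%E).
Proof.
move=> [x1 Sx1] [x2 Sx2] P1S1 P2S2 P1opt P2opt _ _.
split; first exact: gen_proj_prod_proj.
move=> Q QS; apply: le_ereal_inf_tmp => _ [b [b0 Qb] <-].
apply: beta_Sigma_prod_proj_le.
- exact: le_trans (P1opt _ (gen_proj_slice_lproj x2 QS))
    (beta_Sigma_le b0 (restricted_lipschitz_slice_lproj b0 Sx2 Qb)).
- exact: le_trans (P2opt _ (gen_proj_slice_rproj x1 QS))
    (beta_Sigma_le b0 (restricted_lipschitz_slice_rproj b0 Sx1 Qb)).
Qed.
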